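(* Let $\mathfrak k$ be a Lie algebra over a field $\mathbb K$ with $2\in\mathbb K^\times$. The maps $\alpha_2,\beta_1,\gamma,\alpha_3,\beta_2$ described below are well-defined linear maps and the sequence $$\{0\}\to H^2(\mathfrak k)\xrightarrow{\alpha_2}H^1(\mathfrak k,\mathfrak k^* )\xrightarrow{\beta_1}\mathrm{Sym}^2(\mathfrak k)^{\mathfrak k}\xrightarrow{\gamma}H^3(\mathfrak k)\xrightarrow{\alpha_3}H^2(\mathfrak k,\mathfrak k^* )\xrightarrow{\beta_2}H^1(\mathfrak k,\mathrm{Sym}^2(\mathfrak k))$$ is exact.
   Context: $H^p(\mathfrak k,\mathfrak a)$ denotes Chevalley–Eilenberg cohomology with coefficients in a $\mathfrak k$-module $\mathfrak a$, and $H^p(\mathfrak k)=H^p(\mathfrak k,\mathbb K)$ with trivial module. $\mathfrak k^*$ is the coadjoint module: $(x.\lambda)(y)=-\lambda([x,y])$. $\mathrm{Sym}^2(\mathfrak k)$ is the space of symmetric bilinear forms on $\mathfrak k$ with $(x.\kappa)(y,z)=-\kappa([x,y],z)-\kappa(y,[x,z])$; $\mathrm{Sym}^2(\mathfrak k)^{\mathfrak k}$ is the space of invariant ones. Definitions: $\alpha_p([\omega])=[\tilde\alpha_p\omega]$ with $(\tilde\alpha_p\omega)(x_1,\dots,x_{p-1})(y)=\omega(x_1,\dots,x_{p-1},y)$. With $S:C^1(\mathfrak k,\mathfrak k^* )\to\mathrm{Sym}^2(\mathfrak k)$, $S(\eta)(y,z)=\eta(y)(z)+\eta(z)(y)$: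 $\beta_1([\omega])=S(\omega)$ for $\omega\in Z^1(\mathfrak k,\mathfrak k^* )$, and $\beta_2([\omega])=[x\mapsto S(\omega(x,\cdot))]$ for $\omega\in Z^2(\mathfrak k,\mathfrak k^* )$. $\gamma(\kappa)=[\Gamma(\kappa)]$ with $\Gamma(\kappa)(x,y,z)=\kappa([x,y],z)$. *)

From HB Require Import structures.
From mathcomp Require Import all_boot all_order all_algebra.
From mathcomp Require Import functions.
Set Implicit Arguments. Unset Strict Implicit. Unset Printing Implicit Defensive.
Import Order.TTheory GRing.Theory Num.Theory.
Local Open Scope ring_scope.

Definition is_lie_bracket (K : fieldType) (L : lmodType K) (br : L -> L -> L) : Prop :=
  [/\ (forall (a : K) (x y z : L), br (a *: x + y) z = a *: br x z + br y z),
      (forall (a : K) (x y z : L), br z (a *: x + y) = a *: br z x + br z y),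
      (forall x : L, br x x = 0) &
      (forall x y z : L, br x (br y z) + br y (br z x) + br z (br x y) = 0)].

(* Chevalley–Eilenberg cochains.  A p-cochain with values in a module  *)
(* A is represented as a function f : seq L -> A, of which only the    *)
(* values on lists of length p matter; (x_1,...,x_p) is the list       *)
(* [:: x_1; ...; x_p].  The module is given by a K-vector space A, a   *)
(* predicate V carving out the actual module inside A (e.g. linear     *)
(* functionals inside L -> K) and an action act : L -> A -> A.         *)
Section Cochains.
Variables (K : fieldType) (L : lmodType K) (br : L -> L -> L).
Variable (A : lmodType K).

Definition drop_at (T : Type) (i : nat) (s : seq T) : seq T := take i s ++ drop i.+1 s.

Definition multilinear (p : nat) (f : seq L -> A) : Prop :=
  forall (s : seq L) (i : nat) (a : K) (u v : L), size s = p -> (i < p)%N ->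
    f (set_nth 0 s i (a *: u + v)) = a *: f (set_nth 0 s i u) + f (set_nth 0 s i v).

Definition alternating (p : nat) (f : seq L -> A) : Prop :=
  forall (s : seq L) (i j : nat), size s = p -> (i < j < p)%N ->
    nth 0 s i = nth 0 s j -> f s = 0.

Definition cochain (V : A -> Prop) (p : nat) (f : seq L -> A) : Prop :=
  [/\ (forall s : seq L, size s = p -> V (f s)), multilinear p f & alternating p f].

Definition dCE (act : L -> A -> A) (f : seq L -> A) : seq L -> A :=
  fun s =>
    \sum_(i < size s) (-1) ^+ i *: act (nth 0 s i) (f (drop_at i s))
  + \sum_(i < size s) \sum_(j < size s | (i < j)%N)
        (-1) ^+ (i + j) *: f (br (nth 0 s i) (nth 0 s j) :: drop_at i (drop_at j s)).

Definition cocycle (V : A -> Prop) (act : L -> A -> A) (p : nat) (f : seq L -> A) : Prop :=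
  cochain V p f /\ (forall s : seq L, size s = p.+1 -> dCE act f s = 0).

Definition coboundary (V : A -> Prop) (act : L -> A -> A) (p : nat) (f : seq L -> A) : Prop :=
  match p with
  | 0 => forall s : seq L, size s = 0%N -> f s = 0
  | q.+1 => exists g : seq L -> A, cochain V q g /\
              (forall s : seq L, size s = q.+1 -> f s = dCE act g s)
  end.

End Cochains.

Section Modules.
Variables (K : fieldType) (L : lmodType K) (br : L -> L -> L).

Definition triv_val (c : K^o) : Prop := True.
Definition triv_act (x : L) (c : K^o) : K^o := 0.

Definition is_linear_form (l : L -> K^o) : Prop :=
  forall (a : K) (u v : L), l (a *: u + v) = a * l u + l v.
Definition coad (x : L) (l : L -> K^o) : L -> K^o := fun y => - l (br x y).

Definition is_sym_bilinear (kap : L -> L -> K^o) : Prop :=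
  [/\ (forall y z, kap y z = kap z y),
      (forall (a : K) (u v z : L), kap (a *: u + v) z = a * kap u z + kap v z) &
      (forall (a : K) (u v y : L), kap y (a *: u + v) = a * kap y u + kap y v)].
Definition symact (x : L) (kap : L -> L -> K^o) : L -> L -> K^o :=
  fun y z => - kap (br x y) z - kap y (br x z).

Definition invariant_sym (kap : L -> L -> K^o) : Prop :=
  is_sym_bilinear kap /\ forall x : L, symact x kap = 0.

Definition alpha_t (w : seq L -> K^o) : seq L -> (L -> K^o) :=
  fun s y => w (rcons s y).

Definition Ssym (eta : seq L -> (L -> K^o)) : L -> L -> K^o :=
  fun y z => eta [:: y] z + eta [:: z] y.

Definition beta2_t (w : seq L -> (L -> K^o)) : seq L -> (L -> L -> K^o) :=
  fun s y z => w [:: nth 0 s 0; y] z + w [:: nth 0 s 0; z] y.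

Definition Gamma (kap : L -> L -> K^o) : seq L -> K^o :=
  fun s => kap (br (nth 0 s 0) (nth 0 s 1)) (nth 0 s 2).

End Modules.

Section CE.
Variables (K : fieldType) (L : lmodType K) (br : L -> L -> L).
Definition Z_triv p (w : seq L -> K^o) := cocycle br (@triv_val K) (@triv_act K L) p w.
Definition B_triv p (w : seq L -> K^o) := coboundary br (@triv_val K) (@triv_act K L) p w.
Definition Z_dual p (w : seq L -> (L -> K^o)) := cocycle br (@is_linear_form K L) (coad br) p w.
Definition B_dual p (w : seq L -> (L -> K^o)) := coboundary br (@is_linear_form K L) (coad br) p w.
Definition Z_sym p (w : seq L -> (L -> L -> K^o)) := cocycle br (@is_sym_bilinear K L) (symact br) p w.
Definition B_sym p (w : seq L -> (L -> L -> K^o)) := coboundary br (@is_sym_bilinear K L) (symact br) p w.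
End CE.

From HB Require Import structures.
From mathcomp Require Import all_boot all_order all_algebra.
From mathcomp Require Import functions boolp ring.
Set Implicit Arguments. Unset Strict Implicit. Unset Printing Implicit Defensive.
Import Order.TTheory GRing.Theory Num.Theory.
Local Open Scope ring_scope.

(* Every claim concerns cochains of degree at most 4, so it is an identity among
   finitely many values of cochains, brackets and forms, and follows as a linear
   combination of cocycle equations, the Jacobi identity and invariance.  Two
   observations organise these identities: [alpha_t] intertwines the differentials
   of k and k^*, and, 2 being invertible, a k^*-valued 1-cochain [eta], seen as the
   bilinear form (y, z) |-> eta(y)(z), is half its symmetrisation [Ssym eta], an
   element of Sym^2(k), plus half its antisymmetrisation, a trivial 2-cochain.  The
   preimages witnessing exactness are built from this splitting. *)

Lemma eq_lincomb (R : pzRingType) (E k X M : R) : E = 0 -> X = M + k * E -> X = M.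
Proof. by move=> -> ->; rewrite mulr0 addr0. Qed.

(* [lincomb H k] with [H : E = 0] turns a goal [X = M] into [X = M + k * E]; a few
   such steps reduce a goal to a [ring] (or [field]) identity. *)
Ltac lincomb_ H k := refine (eq_lincomb (k := k) H _).
Tactic Notation "lincomb" constr(H) uconstr(k) := lincomb_ H k.

Lemma eq_sub0 (V : zmodType) (a b : V) : a = b -> a - b = 0.
Proof. by move->; rewrite subrr. Qed.

Lemma scaleoE (K : fieldType) (a : K) (x : K^o) : a *: x = a * x.
Proof. by []. Qed.

Lemma fct0E (T : Type) (M : zmodType) : (0 : T -> M) = fun _ => 0.
Proof. by []. Qed.

Ltac pointwise := rewrite ?(addrfctE, opprfctE, scalrfctE, fct0E) /= ?scaleoE.

Section LinearMaps.
Variables (K : fieldType) (U V : lmodType K) (f : U -> V).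
Hypothesis lin_f : linear f.

Let F : {linear U -> V} := HB.pack f (GRing.isLinear.Build K U V *:%R f lin_f).

Lemma lin_map0 : f 0 = 0. Proof. exact: (linear0 F). Qed.
Lemma lin_mapN u : f (- u) = - f u. Proof. exact: (linearN F). Qed.
Lemma lin_mapD u v : f (u + v) = f u + f v. Proof. exact: (linearD F). Qed.

End LinearMaps.

Section LowDegreeCochains.
Variables (K : fieldType) (L A : lmodType K).
Implicit Types f : seq L -> A.

Lemma forall_size0 (P : seq L -> Prop) : P [::] -> forall s, size s = 0%N -> P s.
Proof. by move=> H [|? ?]. Qed.
Lemma forall_size1 (P : seq L -> Prop) :
  (forall x, P [:: x]) -> forall s, size s = 1%N -> P s.
Proof. by move=> H [|x [|? ?]] //= _; apply: H. Qed.
Lemma forall_size2 (P : seq L -> Prop) :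
  (forall x y, P [:: x; y]) -> forall s, size s = 2%N -> P s.
Proof. by move=> H [|x [|y [|? ?]]] //= _; apply: H. Qed.
Lemma forall_size3 (P : seq L -> Prop) :
  (forall x y z, P [:: x; y; z]) -> forall s, size s = 3%N -> P s.
Proof. by move=> H [|x [|y [|z [|? ?]]]] //= _; apply: H. Qed.
Lemma forall_size4 (P : seq L -> Prop) :
  (forall x y z u, P [:: x; y; z; u]) -> forall s, size s = 4%N -> P s.
Proof. by move=> H [|x [|y [|z [|u [|? ?]]]]] //= _; apply: H. Qed.

Lemma multilinear0 f : multilinear 0 f.
Proof. by []. Qed.

Lemma multilinear1I f :
  (forall a u v, f [:: a *: u + v] = a *: f [:: u] + f [:: v]) -> multilinear 1 f.
Proof. by move=> H s [|i] a u v //; case: s => [|x [|? ?]] //= _ _; apply: H. Qed.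

Lemma multilinear1E f : multilinear 1 f ->
  forall a u v, f [:: a *: u + v] = a *: f [:: u] + f [:: v].
Proof. by move=> H a u v; apply: (H [:: u] 0%N). Qed.

Lemma multilinear2I f :
  (forall a u v y, f [:: a *: u + v; y] = a *: f [:: u; y] + f [:: v; y]) ->
  (forall a u v x, f [:: x; a *: u + v] = a *: f [:: x; u] + f [:: x; v]) ->
  multilinear 2 f.
Proof.
move=> H1 H2 s [|[|i]] a u v //; case: s => [|x [|y [|? ?]]] //= _ _;
  by [apply: H1 | apply: H2].
Qed.

Lemma multilinear2E1 f : multilinear 2 f ->
  forall a u v y, f [:: a *: u + v; y] = a *: f [:: u; y] + f [:: v; y].
Proof. by move=> H a u v y; apply: (H [:: u; y] 0%N). Qed.

Lemma multilinear2E2 f : multilinear 2 f ->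
  forall a u v x, f [:: x; a *: u + v] = a *: f [:: x; u] + f [:: x; v].
Proof. by move=> H a u v x; apply: (H [:: x; u] 1%N). Qed.

Lemma multilinear3I f :
  (forall a u v y z, f [:: a *: u + v; y; z] = a *: f [:: u; y; z] + f [:: v; y; z]) ->
  (forall a u v x z, f [:: x; a *: u + v; z] = a *: f [:: x; u; z] + f [:: x; v; z]) ->
  (forall a u v x y, f [:: x; y; a *: u + v] = a *: f [:: x; y; u] + f [:: x; y; v]) ->
  multilinear 3 f.
Proof.
move=> H1 H2 H3 s [|[|[|i]]] a u v //; case: s => [|x [|y [|z [|? ?]]]] //= _ _;
  by [apply: H1 | apply: H2 | apply: H3].
Qed.

Lemma multilinear3E1 f : multilinear 3 f ->
  forall a u v y z, f [:: a *: u + v; y; z] = a *: f [:: u; y; z] + f [:: v; y; z].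
Proof. by move=> H a u v y z; apply: (H [:: u; y; z] 0%N). Qed.

Lemma multilinear3E2 f : multilinear 3 f ->
  forall a u v x z, f [:: x; a *: u + v; z] = a *: f [:: x; u; z] + f [:: x; v; z].
Proof. by move=> H a u v x z; apply: (H [:: x; u; z] 1%N). Qed.

Lemma multilinear3E3 f : multilinear 3 f ->
  forall a u v x y, f [:: x; y; a *: u + v] = a *: f [:: x; y; u] + f [:: x; y; v].
Proof. by move=> H a u v x y; apply: (H [:: x; y; u] 2%N). Qed.

Lemma alternating0 f : alternating 0 f.
Proof. by move=> s i j _ /andP[_]; rewrite ltn0. Qed.

Lemma alternating1 f : alternating 1 f.
Proof. by move=> s i [|[|j]] _ /andP[] //; rewrite ltn0. Qed.

Lemma alternating2I f : (forall x, f [:: x; x] = 0) -> alternating 2 f.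
Proof.
move=> H s i j; case: s => [|x [|y [|? ?]]] //= _.
by case: i j => [|[|i]] [|[|[|j]]] //=; rewrite ?andbF // => _ ->; apply: H.
Qed.

Lemma alternating2E f : alternating 2 f -> forall x, f [:: x; x] = 0.
Proof. by move=> H x; apply: (H _ 0%N 1%N). Qed.

Lemma alternating3I f : (forall x z, f [:: x; x; z] = 0) ->
  (forall x y, f [:: x; y; x] = 0) -> (forall x y, f [:: x; y; y] = 0) ->
  alternating 3 f.
Proof.
move=> H1 H2 H3 s i j; case: s => [|x [|y [|z [|? ?]]]] //= _.
case: i j => [|[|[|i]]] [|[|[|[|j]]]] //=; rewrite ?andbF // => _ ->;
  by [apply: H1 | apply: H2 | apply: H3].
Qed.

Lemma alternating3E1 f : alternating 3 f -> forall x z, f [:: x; x; z] = 0.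
Proof. by move=> H x z; apply: (H _ 0%N 1%N). Qed.

Lemma alternating3E3 f : alternating 3 f -> forall x y, f [:: x; y; y] = 0.
Proof. by move=> H x y; apply: (H _ 1%N 2%N). Qed.

Section SlotAdditivity.
Variable f : seq L -> A.

Lemma multilinear2D1 : multilinear 2 f ->
  forall u v y, f [:: u + v; y] = f [:: u; y] + f [:: v; y].
Proof.
move=> H u v y.
exact: (lin_mapD (f := fun u => f [:: u; y])
         (fun a u v => multilinear2E1 H a u v y)).
Qed.

Lemma multilinear2D2 : multilinear 2 f ->
  forall u v x, f [:: x; u + v] = f [:: x; u] + f [:: x; v].
Proof.
move=> H u v x.
exact: (lin_mapD (f := fun u => f [:: x; u])
         (fun a u v => multilinear2E2 H a u v x)).
Qed.

Lemma multilinear3D1 : multilinear 3 f ->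
  forall u v y z, f [:: u + v; y; z] = f [:: u; y; z] + f [:: v; y; z].
Proof.
move=> H u v y z.
exact: (lin_mapD (f := fun u => f [:: u; y; z])
         (fun a u v => multilinear3E1 H a u v y z)).
Qed.

Lemma multilinear3D2 : multilinear 3 f ->
  forall u v x z, f [:: x; u + v; z] = f [:: x; u; z] + f [:: x; v; z].
Proof.
move=> H u v x z.
exact: (lin_mapD (f := fun u => f [:: x; u; z])
         (fun a u v => multilinear3E2 H a u v x z)).
Qed.

Lemma multilinear3D3 : multilinear 3 f ->
  forall u v x y, f [:: x; y; u + v] = f [:: x; y; u] + f [:: x; y; v].
Proof.
move=> H u v x y.
exact: (lin_mapD (f := fun u => f [:: x; y; u])
         (fun a u v => multilinear3E3 H a u v x y)).
Qed.

End SlotAdditivity.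

Section Antisymmetry.
Variable f : seq L -> A.
Hypotheses (f_lin : multilinear 2 f) (f_alt : alternating 2 f).

Lemma alternating2_anti x y : f [:: y; x] = - f [:: x; y].
Proof.
apply/eqP; rewrite -subr_eq0 opprK; have := alternating2E f_alt (x + y).
rewrite multilinear2D1 // !multilinear2D2 // !(alternating2E f_alt) add0r addr0 addrC.
by move->.
Qed.

End Antisymmetry.

Section Antisymmetry3.
Variable f : seq L -> A.
Hypotheses (f_lin : multilinear 3 f) (f_alt : alternating 3 f).

Lemma alternating3_anti23 x y z : f [:: x; z; y] = - f [:: x; y; z].
Proof.
apply/eqP; rewrite -subr_eq0 opprK; have := alternating3E3 f_alt x (y + z).
rewrite multilinear3D2 // !multilinear3D3 // !(alternating3E3 f_alt) add0r addr0 addrC.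
by move->.
Qed.

Lemma alternating3_rot x y z : f [:: z; x; y] = f [:: x; y; z].
Proof.
have anti12 : f [:: z; x; y] = - f [:: x; z; y].
  apply/eqP; rewrite -subr_eq0 opprK; have := alternating3E1 f_alt (x + z) y.
  rewrite multilinear3D1 // !multilinear3D2 // !(alternating3E1 f_alt) add0r addr0 addrC.
  by move->.
by rewrite anti12 alternating3_anti23 opprK.
Qed.

End Antisymmetry3.

End LowDegreeCochains.

Ltac dCE_expand :=
  rewrite /dCE /= !big_ord_recl !big_ord0 /=;
  rewrite ?(big_mkcond (fun j : 'I_ _ => _ < _)%N) /= ?big_ord_recl ?big_ord0 /=;
  rewrite /drop_at /= /bump /=;
  rewrite ?(exprS, expr0, mulr1, mulrN1, mulN1r, opprK, scale1r, scaleN1r, add0r, addr0).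

Section LowDegreeDifferentials.
Variables (K : fieldType) (L A : lmodType K) (br : L -> L -> L) (act : L -> A -> A).
Implicit Types f : seq L -> A.

Lemma dCE1 f x : dCE br act f [:: x] = act x (f [::]).
Proof. by dCE_expand. Qed.

Lemma dCE2 f x y :
  dCE br act f [:: x; y] = act x (f [:: y]) - act y (f [:: x]) - f [:: br x y].
Proof. by dCE_expand. Qed.

Lemma dCE3 f x y z : dCE br act f [:: x; y; z] =
  act x (f [:: y; z]) - act y (f [:: x; z]) + act z (f [:: x; y])
  - f [:: br x y; z] + f [:: br x z; y] - f [:: br y z; x].
Proof. by dCE_expand; rewrite !addrA. Qed.

Lemma dCE4 f x y z u : dCE br act f [:: x; y; z; u] =
  act x (f [:: y; z; u]) - act y (f [:: x; z; u]) + act z (f [:: x; y; u])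
  - act u (f [:: x; y; z])
  - f [:: br x y; z; u] + f [:: br x z; y; u] - f [:: br x u; y; z]
  - f [:: br y z; x; u] + f [:: br y u; x; z] - f [:: br z u; x; y].
Proof. by dCE_expand; rewrite !addrA. Qed.

End LowDegreeDifferentials.

Section ModuleDifferentials.
Variables (K : fieldType) (L : lmodType K) (br : L -> L -> L).
Local Notation d_triv := (dCE br (@triv_act K L)).
Local Notation d_coad := (dCE br (coad br)).
Local Notation d_sym := (dCE br (symact br)).

Lemma dCE_triv2 (f : seq L -> K^o) x y : d_triv f [:: x; y] = - f [:: br x y].
Proof. by rewrite dCE2 /triv_act subrr sub0r. Qed.

Lemma dCE_triv3 (f : seq L -> K^o) x y z : d_triv f [:: x; y; z] =
  - f [:: br x y; z] + f [:: br x z; y] - f [:: br y z; x].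
Proof. by rewrite dCE3 /triv_act subrr add0r sub0r. Qed.

Lemma dCE_triv4 (f : seq L -> K^o) x y z u : d_triv f [:: x; y; z; u] =
  - f [:: br x y; z; u] + f [:: br x z; y; u] - f [:: br x u; y; z]
  - f [:: br y z; x; u] + f [:: br y u; x; z] - f [:: br z u; x; y].
Proof. by rewrite dCE4 /triv_act subrr add0r subrr sub0r. Qed.

Lemma dCE_coad1 (f : seq L -> L -> K^o) x z : d_coad f [:: x] z = - f [::] (br x z).
Proof. by rewrite dCE1. Qed.

Lemma dCE_coad2 (f : seq L -> L -> K^o) x y z :
  d_coad f [:: x; y] z = f [:: x] (br y z) - f [:: y] (br x z) - f [:: br x y] z.
Proof. by rewrite dCE2 /coad; pointwise; ring. Qed.

Lemma dCE_coad3 (f : seq L -> L -> K^o) x y z u : d_coad f [:: x; y; z] u =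
  - f [:: y; z] (br x u) + f [:: x; z] (br y u) - f [:: x; y] (br z u)
  - f [:: br x y; z] u + f [:: br x z; y] u - f [:: br y z; x] u.
Proof. by rewrite dCE3 /coad; pointwise; ring. Qed.

Lemma dCE_sym1 (f : seq L -> L -> L -> K^o) x y z :
  d_sym f [:: x] y z = - f [::] (br x y) z - f [::] y (br x z).
Proof. by rewrite dCE1. Qed.

Lemma dCE_sym2 (f : seq L -> L -> L -> K^o) x y p q : d_sym f [:: x; y] p q =
  - f [:: y] (br x p) q - f [:: y] p (br x q) + f [:: x] (br y p) q
  + f [:: x] p (br y q) - f [:: br x y] p q.
Proof. by rewrite dCE2 /symact; pointwise; ring. Qed.

End ModuleDifferentials.

Section SymmetricForms.
Variables (K : fieldType) (L : lmodType K) (k : L -> L -> K^o).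
Hypothesis k_sym : is_sym_bilinear k.

Lemma sym_formC y z : k y z = k z y. Proof. by case: k_sym. Qed.

Lemma sym_form_linl a u v z : k (a *: u + v) z = a * k u z + k v z.
Proof. by case: k_sym. Qed.

Lemma sym_form_linr a u v y : k y (a *: u + v) = a * k y u + k y v.
Proof. by case: k_sym. Qed.

Lemma sym_formDl u v z : k (u + v) z = k u z + k v z.
Proof. exact: (lin_mapD (f := k^~ z) (fun a u v => sym_form_linl a u v z)). Qed.
Lemma sym_formNl u z : k (- u) z = - k u z.
Proof. exact: (lin_mapN (f := k^~ z) (fun a u v => sym_form_linl a u v z)). Qed.
Lemma sym_form0l z : k 0 z = 0.
Proof. exact: (lin_map0 (f := k^~ z) (fun a u v => sym_form_linl a u v z)). Qed.
Lemma sym_formDr u v y : k y (u + v) = k y u + k y v.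
Proof. exact: (lin_mapD (f := k y) (fun a u v => sym_form_linr a u v y)). Qed.
Lemma sym_formNr u y : k y (- u) = - k y u.
Proof. exact: (lin_mapN (f := k y) (fun a u v => sym_form_linr a u v y)). Qed.
Lemma sym_form0r y : k y 0 = 0.
Proof. exact: (lin_map0 (f := k y) (fun a u v => sym_form_linr a u v y)). Qed.

End SymmetricForms.

Section LieAlgebra.
Variables (K : fieldType) (L : lmodType K) (br : L -> L -> L).
Hypothesis Hlie : is_lie_bracket br.

Lemma br_linl a x y z : br (a *: x + y) z = a *: br x z + br y z.
Proof. by case: Hlie. Qed.
Lemma br_linr a x y z : br z (a *: x + y) = a *: br z x + br z y.
Proof. by case: Hlie. Qed.
Lemma brxx x : br x x = 0.
Proof. by case: Hlie. Qed.
Lemma jacobi x y z : br x (br y z) + br y (br z x) + br z (br x y) = 0.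
Proof. by case: Hlie. Qed.

Lemma brDl u v z : br (u + v) z = br u z + br v z.
Proof. exact: (lin_mapD (f := br^~ z) (fun a u v => br_linl a u v z)). Qed.
Lemma brDr u v z : br z (u + v) = br z u + br z v.
Proof. exact: (lin_mapD (f := br z) (fun a u v => br_linr a u v z)). Qed.
Lemma brNr u z : br z (- u) = - br z u.
Proof. exact: (lin_mapN (f := br z) (fun a u v => br_linr a u v z)). Qed.

Lemma br_anti x y : br y x = - br x y.
Proof.
apply/eqP; rewrite -subr_eq0 opprK; have := brxx (x + y).
by rewrite brDl !brDr !brxx add0r addr0 addrC => ->.
Qed.

Section InvariantForms.
Variable k : L -> L -> K^o.
Hypothesis k_inv : invariant_sym br k.

Lemma invariant_sym_adj a b c : k (br a b) c = - k b (br a c).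
Proof.
case: k_inv => _ /(_ a) /(congr1 (fun F => F b c)) /= /eqP.
by rewrite /symact subr_eq0 => /eqP <-; rewrite opprK.
Qed.

Lemma invariant_sym_assoc a b c : k (br a b) c = k a (br b c).
Proof.
case: k_inv => k_sym _.
by rewrite br_anti (sym_formNl k_sym) invariant_sym_adj opprK.
Qed.

End InvariantForms.

End LieAlgebra.

Section CochainMaps.
Variables (K : fieldType) (L : lmodType K) (br : L -> L -> L).

Lemma alpha_t_linear : linear (@alpha_t K L).
Proof. by []. Qed.

Lemma Ssym_linear : linear (@Ssym K L).
Proof.
by move=> a e e'; apply: funext => y; apply: funext => z; rewrite /Ssym; pointwise; ring.
Qed.

Lemma Gamma_linear : linear (Gamma br).
Proof. by []. Qed.

Lemma beta2_t_linear : linear (@beta2_t K L).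
Proof.
move=> a w w'; apply: funext => s; apply: funext => y; apply: funext => z.
by rewrite /beta2_t; pointwise; ring.
Qed.

End CochainMaps.

Section Alpha.
Variables (K : fieldType) (L : lmodType K) (br : L -> L -> L).
Local Notation lf := (@is_linear_form K L).
Local Notation d_triv := (dCE br (@triv_act K L)).
Local Notation d_coad := (dCE br (coad br)).

Lemma alpha_t_cochain1 (w : seq L -> K^o) :
  cochain (@triv_val K) 2 w -> cochain lf 1 (alpha_t w).
Proof.
case=> _ Hm _; split; last exact: alternating1.
- by apply: forall_size1 => x a u v; rewrite /alpha_t /= (multilinear2E2 Hm).
- apply: multilinear1I => a u v; apply: funext => y.
  by rewrite /alpha_t /= (multilinear2E1 Hm).
Qed.

Lemma alpha_t_cochain2 (w : seq L -> K^o) :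
  cochain (@triv_val K) 3 w -> cochain lf 2 (alpha_t w).
Proof.
case=> _ Hm Ha; split.
- by apply: forall_size2 => x y a u v; rewrite /alpha_t /= (multilinear3E3 Hm).
- apply: multilinear2I => a u v y; apply: funext => z; rewrite /alpha_t /=.
  + by rewrite (multilinear3E1 Hm).
  + by rewrite (multilinear3E2 Hm).
- by apply: alternating2I => x; apply: funext => z; rewrite /alpha_t /= (alternating3E1 Ha).
Qed.

Lemma dCE_alpha_t1 (g : seq L -> K^o) x z :
  d_coad (alpha_t g) [:: x] z = d_triv g [:: x; z].
Proof. by rewrite dCE_coad1 dCE_triv2. Qed.

Lemma dCE_alpha_t2 (w : seq L -> K^o) : multilinear 2 w -> alternating 2 w ->
  forall x y z, d_coad (alpha_t w) [:: x; y] z = d_triv w [:: x; y; z].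
Proof.
move=> Hm Ha x y z; rewrite dCE_coad2 dCE_triv3 /alpha_t /=.
by rewrite (alternating2_anti Hm Ha (br y z)) (alternating2_anti Hm Ha (br x z)); ring.
Qed.

Lemma dCE_alpha_t3 (w : seq L -> K^o) : multilinear 3 w -> alternating 3 w ->
  forall x y z u, d_coad (alpha_t w) [:: x; y; z] u = d_triv w [:: x; y; z; u].
Proof.
move=> Hm Ha x y z u; rewrite dCE_coad3 dCE_triv4 /alpha_t /=.
rewrite -(alternating3_rot Hm Ha y z (br x u)) -(alternating3_rot Hm Ha x z (br y u)).
by rewrite -(alternating3_rot Hm Ha x y (br z u)); ring.
Qed.

End Alpha.

Section WellDefined.
Variables (K : fieldType) (L : lmodType K) (br : L -> L -> L).
Hypothesis Hlie : is_lie_bracket br.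
Local Notation lf := (@is_linear_form K L).

Lemma Z_dual1E e : Z_dual br 1 e ->
  forall a b r, e [:: a] (br b r) - e [:: b] (br a r) - e [:: br a b] r = 0.
Proof. by case=> _ Hd a b r; rewrite -(dCE_coad2 br) Hd. Qed.

Lemma Z_dual2E w : Z_dual br 2 w -> forall a b c r,
  - w [:: b; c] (br a r) + w [:: a; c] (br b r) - w [:: a; b] (br c r)
  - w [:: br a b; c] r + w [:: br a c; b] r - w [:: br b c; a] r = 0.
Proof. by case=> _ Hd a b c r; rewrite -(dCE_coad3 br) Hd. Qed.

Lemma Ssym_sym_bilinear (h : seq L -> L -> K^o) :
  (forall x, lf (h [:: x])) -> multilinear 1 h -> is_sym_bilinear (Ssym h).
Proof.
move=> Hv Hm; split.
- by move=> y z; rewrite /Ssym addrC.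
- by move=> a u v z; rewrite /Ssym (multilinear1E Hm) /= (Hv z); pointwise; ring.
- by move=> a u v y; rewrite /Ssym (multilinear1E Hm) /= (Hv y); pointwise; ring.
Qed.

Lemma alpha2_cocycle w : Z_triv br 2 w -> Z_dual br 1 (alpha_t w).
Proof.
case=> Hc Hd; split; first exact: alpha_t_cochain1.
case: Hc => _ Hm Ha.
by apply: forall_size2 => x y; apply: funext => z; rewrite dCE_alpha_t2 // Hd.
Qed.

Lemma alpha2_coboundary w : B_triv br 2 w -> B_dual br 1 (alpha_t w).
Proof.
case=> g [[_ Hm _] Hg]; exists (alpha_t g); split.
- split; [ | exact: multilinear0 | exact: alternating0].
  by apply: forall_size0 => a u v; rewrite /alpha_t /= (multilinear1E Hm).
- by apply: forall_size1 => x; apply: funext => z; rewrite dCE_alpha_t1 /alpha_t /= Hg.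
Qed.

Lemma beta1_cocycle e : Z_dual br 1 e -> invariant_sym br (Ssym e).
Proof.
move=> Ze; have dd := Z_dual1E Ze; case: Ze => [[Hv Hm _] _].
split; first by apply: Ssym_sym_bilinear => // x; apply: Hv.
move=> x; apply: funext => y; apply: funext => z; rewrite /symact /Ssym.
have c := dd x z y; rewrite (br_anti Hlie y z) (lin_mapN (Hv [:: x] erefl)) in c.
by pointwise; lincomb (dd x y z) 1; lincomb c 1; ring.
Qed.

Lemma beta1_coboundary e : B_dual br 1 e -> Ssym e = 0.
Proof.
case=> h [[Hv _ _] He]; apply: funext => y; apply: funext => z.
rewrite /Ssym (He [:: y]) // (He [:: z]) // !dCE_coad1 (br_anti Hlie y z).
by rewrite (lin_mapN (Hv [::] erefl)); pointwise; ring.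
Qed.

Lemma Gamma_cochain k : (2%:R : K) != 0 -> invariant_sym br k ->
  cochain (@triv_val K) 3 (Gamma br k).
Proof.
move=> H2 k_inv; have adj := invariant_sym_adj k_inv; case: k_inv => k_sym _.
split; [by [] | | ].
- apply: multilinear3I => a u v *; rewrite /Gamma /=.
  + by rewrite (br_linl Hlie) (sym_form_linl k_sym).
  + by rewrite (br_linr Hlie) (sym_form_linl k_sym).
  + by rewrite (sym_form_linr k_sym).
- apply: alternating3I => x y; rewrite /Gamma /=.
  + by rewrite (brxx Hlie) (sym_form0l k_sym).
  + by rewrite adj (brxx Hlie) (sym_form0r k_sym) oppr0.
  + apply: (mulfI H2); rewrite mulr0.
    have E : k (br x y) y + k (br x y) y = 0 by rewrite {1}adj (sym_formC k_sym y) addNr.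
    by lincomb E 1; ring.
Qed.

(* Invariance moves every bracket into the second slot of [k], where the six
   terms of [d Gamma(k)] collapse to twice the Jacobi identity. *)
Lemma gamma_cocycle k : (2%:R : K) != 0 -> invariant_sym br k -> Z_triv br 3 (Gamma br k).
Proof.
move=> H2 k_inv; split; first exact: Gamma_cochain.
have assoc := invariant_sym_assoc Hlie k_inv; case: k_inv => k_sym _.
apply: forall_size4 => x y z u; rewrite dCE_triv4 /Gamma /=.
rewrite (assoc (br x y) z u) (assoc (br x z) y u) (assoc (br x u) y z).
rewrite (assoc (br y z) x u) (assoc (br y u) x z) (assoc (br z u) x y).
rewrite (sym_formC k_sym (br y z)) (sym_formC k_sym (br y u)) (sym_formC k_sym (br z u)).
rewrite (assoc x y) (assoc x z) (assoc x u).
have J : k x (br y (br z u)) - k x (br z (br y u)) + k x (br u (br y z)) = 0.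
  have := congr1 (k x) (jacobi Hlie y z u).
  rewrite !(sym_formDr k_sym) (sym_form0r k_sym) (br_anti Hlie y u) (brNr Hlie).
  by rewrite (sym_formNr k_sym) => <-.
by lincomb J (-2%:R); ring.
Qed.

Lemma alpha3_cocycle w : Z_triv br 3 w -> Z_dual br 2 (alpha_t w).
Proof.
case=> Hc Hd; split; first exact: alpha_t_cochain2.
case: Hc => _ Hm Ha.
by apply: forall_size3 => x y z; apply: funext => u; rewrite dCE_alpha_t3 // Hd.
Qed.

Lemma alpha3_coboundary w : B_triv br 3 w -> B_dual br 2 (alpha_t w).
Proof.
case=> g [Hc Hg]; exists (alpha_t g); split; first exact: alpha_t_cochain1.
case: Hc => _ Hm Ha.
by apply: forall_size2 => x y; apply: funext => z; rewrite dCE_alpha_t2 // /alpha_t /= Hg.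
Qed.

Lemma beta2_t_cochain (w : seq L -> L -> K^o) :
  cochain lf 2 w -> cochain (@is_sym_bilinear K L) 1 (beta2_t w).
Proof.
case=> Hv Hm _; split; last exact: alternating1.
- apply: forall_size1 => x; rewrite /beta2_t /=; split.
  + by move=> y z; rewrite addrC.
  + by move=> a u v z; rewrite (multilinear2E2 Hm) (Hv [:: x; z]) //; pointwise; ring.
  + by move=> a u v y; rewrite (multilinear2E2 Hm) (Hv [:: x; y]) //; pointwise; ring.
- apply: multilinear1I => a u v; apply: funext => y; apply: funext => z.
  by rewrite /beta2_t /= !(multilinear2E1 Hm); pointwise; ring.
Qed.

Lemma beta2_cocycle w : Z_dual br 2 w -> Z_sym br 1 (beta2_t w).
Proof.
move=> Zw; have dd := Z_dual2E Zw; case: Zw => [[Hv Hm Ha] _].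
split; first exact: beta2_t_cochain.
have wA a b r : w [:: b; a] r = - w [:: a; b] r by rewrite (alternating2_anti Hm Ha a b).
apply: forall_size2 => x y; apply: funext => p; apply: funext => q.
rewrite dCE_sym2 /beta2_t /= (wA (br x p) y) (wA (br x q) y) (wA (br y p) x) (wA (br y q) x).
have c := dd x y q p; rewrite (br_anti Hlie p q) (lin_mapN (Hv [:: x; y] erefl)) in c.
by pointwise; lincomb (dd x y p q) 1; lincomb c 1; ring.
Qed.

Lemma beta2_coboundary w : B_dual br 2 w -> B_sym br 1 (beta2_t w).
Proof.
case=> h [[Hv Hm _] Hw]; exists (fun _ => Ssym h); split.
- split; [ | exact: multilinear0 | exact: alternating0].
  by apply: forall_size0; apply: Ssym_sym_bilinear => // x; apply: Hv.
- apply: forall_size1 => x; apply: funext => y; apply: funext => z.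
  rewrite dCE_sym1 /beta2_t /= !Hw // !dCE_coad2 /Ssym (br_anti Hlie y z).
  by rewrite (lin_mapN (Hv [:: x] erefl)); ring.
Qed.

End WellDefined.

Section Exactness.
Variables (K : fieldType) (L : lmodType K) (br : L -> L -> L).
Hypotheses (Hlie : is_lie_bracket br) (H2 : (2%:R : K) != 0).
Local Notation lf := (@is_linear_form K L).

Lemma alpha2_coboundary_reflect w : B_dual br 1 (alpha_t w) -> B_triv br 2 w.
Proof.
case=> h [[Hv _ _] Hh]; exists (fun s => h [::] (nth 0 s 0)); split.
- split; [by [] | | exact: alternating1].
  by apply: multilinear1I => a u v /=; apply: (Hv [::] erefl).
- apply: forall_size2 => x y; rewrite dCE_triv2 /=.
  by have := congr1 (fun F => F y) (Hh [:: x] erefl); rewrite dCE_coad1.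
Qed.

Lemma Ssym_alpha_t (w : seq L -> K^o) :
  multilinear 2 w -> alternating 2 w -> Ssym (alpha_t w) = 0.
Proof.
move=> Hm Ha; apply: funext => y; apply: funext => z.
by rewrite /Ssym /alpha_t /= (alternating2_anti Hm Ha y z) addrN.
Qed.

Lemma ker_beta1_im_alpha2 e : Z_dual br 1 e -> Ssym e = 0 ->
  exists w, Z_triv br 2 w /\ B_dual br 1 (e - alpha_t w).
Proof.
move=> Ze HS; have dd := Z_dual1E Ze; case: Ze => [[Hv Hm _] _].
have S0 a b : e [:: a] b + e [:: b] a = 0.
  by move: (congr1 (fun F => F a b) HS); rewrite /Ssym; pointwise.
exists (fun s => e [:: nth 0 s 0] (nth 0 s 1)); split; first split; first split.
- by [].
- apply: multilinear2I => a u v y /=; first by rewrite (multilinear1E Hm).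
  exact: (Hv [:: y]).
- apply: alternating2I => x /=; apply: (mulfI H2); rewrite mulr0.
  by lincomb (S0 x x) 1; ring.
- apply: forall_size3 => x y z; rewrite dCE_triv3 /=.
  by lincomb (dd x y z) 1; lincomb (S0 (br x z) y) 1; lincomb (S0 (br y z) x) (-1); ring.
- exists (fun _ _ => 0); split.
  + split; [ | exact: multilinear0 | exact: alternating0].
    by apply: forall_size0 => a u v; rewrite mulr0 addr0.
  + apply: forall_size1 => x; apply: funext => z.
    by rewrite dCE_coad1 /alpha_t; pointwise; ring.
Qed.

Lemma im_alpha2_ker_beta1 e w : Z_triv br 2 w -> B_dual br 1 (e - alpha_t w) ->
  Ssym e = 0.
Proof.
move=> [[_ Hm Ha] _] /(beta1_coboundary Hlie) He.
by rewrite -(subrK (alpha_t w) e) (lin_mapD (@Ssym_linear K L)) He Ssym_alpha_t // addr0.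
Qed.

Lemma ker_gamma_im_beta1 k : invariant_sym br k -> B_triv br 3 (Gamma br k) ->
  exists e, Z_dual br 1 e /\ Ssym e = k.
Proof.
move=> k_inv [g [[_ Hgm Hga] Hg]].
have adj := invariant_sym_adj k_inv; have assoc := invariant_sym_assoc Hlie k_inv.
case: k_inv => k_sym _.
exists (fun s y => (k (nth 0 s 0) y - g [:: nth 0 s 0; y]) / 2%:R).
split; first split; first split.
- apply: forall_size1 => x a u v /=.
  by rewrite (sym_form_linr k_sym) (multilinear2E2 Hgm); pointwise; ring.
- apply: multilinear1I => a u v; apply: funext => y /=.
  by rewrite (sym_form_linl k_sym) (multilinear2E1 Hgm); pointwise; ring.
- exact: alternating1.
- apply: forall_size2 => x y; apply: funext => z; rewrite dCE_coad2 /=; pointwise.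
  have C := eq_sub0 (Hg [:: x; y; z] erefl); rewrite dCE_triv3 /Gamma /= in C.
  have A := eq_sub0 (adj x y z).
  rewrite (alternating2_anti Hgm Hga (br y z)) (alternating2_anti Hgm Hga (br x z)).
  by rewrite -(assoc x y z); lincomb C (2%:R^-1); lincomb A (- 2%:R^-1); ring.
- apply: funext => y; apply: funext => z /=.
  rewrite /Ssym /= (sym_formC k_sym z y) (alternating2_anti Hgm Hga y z).
  by pointwise; field.
Qed.

Lemma im_beta1_ker_gamma e : Z_dual br 1 e -> B_triv br 3 (Gamma br (Ssym e)).
Proof.
move=> Ze; have dd := Z_dual1E Ze; case: Ze => [[Hv Hm _] _].
exists (fun s => e [:: nth 0 s 1] (nth 0 s 0) - e [:: nth 0 s 0] (nth 0 s 1)); split.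
- split; [by [] | | ].
  + apply: multilinear2I => a u v y /=;
      by rewrite (multilinear1E Hm) ?(Hv [:: y] erefl); pointwise; ring.
  + by apply: alternating2I => x /=; rewrite subrr.
- apply: forall_size3 => x y z; rewrite dCE_triv3 /Gamma /Ssym /=.
  have c2 := dd x z y; have c3 := dd y z x.
  rewrite (br_anti Hlie y z) (lin_mapN (Hv [:: x] erefl)) in c2.
  rewrite (br_anti Hlie x z) (lin_mapN (Hv [:: y] erefl)) in c3.
  rewrite (br_anti Hlie x y) (lin_mapN (Hv [:: z] erefl)) in c3.
  by lincomb c2 (-1); lincomb c3 1; ring.
Qed.

Section KernelAlpha3.
Variables (w : seq L -> K^o) (eta : seq L -> L -> K^o).
Hypotheses (w_lin : multilinear 3 w) (w_alt : alternating 3 w).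
Hypotheses (eta_lf : forall x, lf (eta [:: x])) (eta_lin : multilinear 1 eta).
Hypothesis w_d_eta : forall a b c,
  w [:: a; b; c] = eta [:: a] (br b c) - eta [:: b] (br a c) - eta [:: br a b] c.

Definition half_Ssym : L -> L -> K^o := fun a b => Ssym eta a b / 2%:R.

Lemma half_Ssym_invariant : invariant_sym br half_Ssym.
Proof.
have W a b c := eq_sub0 (w_d_eta a b c).
split; first split.
- by move=> y z; rewrite /half_Ssym /Ssym addrC.
- move=> a u v z; rewrite /half_Ssym /Ssym (multilinear1E eta_lin) (eta_lf z).
  by pointwise; ring.
- move=> a u v y; rewrite /half_Ssym /Ssym (multilinear1E eta_lin) (eta_lf y).
  by pointwise; ring.
- move=> x; apply: funext => y; apply: funext => z.
  rewrite /symact /half_Ssym /Ssym; pointwise.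
  have W' := W x z y.
  rewrite (alternating3_anti23 w_lin w_alt x y z) (br_anti Hlie y z) in W'.
  rewrite (lin_mapN (eta_lf x)) in W'.
  by lincomb (W x y z) (- 2%:R^-1); lincomb W' (- 2%:R^-1); ring.
Qed.

Lemma half_Ssym_Gamma_cohomologous : B_triv br 3 (w - Gamma br half_Ssym).
Proof.
have adj := invariant_sym_adj half_Ssym_invariant.
have assoc := invariant_sym_assoc Hlie half_Ssym_invariant.
exists (fun s => (eta [:: nth 0 s 0] (nth 0 s 1) - eta [:: nth 0 s 1] (nth 0 s 0)) / 2%:R).
split.
- split; [by [] | | ].
  + apply: multilinear2I => a u v y /=;
      by rewrite (multilinear1E eta_lin) ?(eta_lf y); pointwise; ring.
  + by apply: alternating2I => x /=; rewrite subrr mul0r.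
- apply: forall_size3 => x y z; rewrite dCE_triv3 /Gamma; pointwise.
  have A := eq_sub0 (adj x y z); have M := eq_sub0 (assoc x y z).
  rewrite /half_Ssym /Ssym /= in A M *.
  by lincomb (eq_sub0 (w_d_eta x y z)) 1; lincomb A (-1); lincomb M (-1); field.
Qed.

End KernelAlpha3.

Lemma ker_alpha3_im_gamma w : Z_triv br 3 w -> B_dual br 2 (alpha_t w) ->
  exists k, invariant_sym br k /\ B_triv br 3 (w - Gamma br k).
Proof.
case=> [[_ Hwm Hwa] _] [eta [[Hv Hm _] Heta]].
have w_d_eta a b c : w [:: a; b; c] =
    eta [:: a] (br b c) - eta [:: b] (br a c) - eta [:: br a b] c.
  by move: (congr1 (fun F => F c) (Heta [:: a; b] erefl)); rewrite dCE_coad2.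
have eta_lf x : lf (eta [:: x]) by apply: Hv.
exists (half_Ssym eta); split.
- exact: (half_Ssym_invariant Hwm Hwa eta_lf Hm w_d_eta).
- exact: (half_Ssym_Gamma_cohomologous Hwm Hwa eta_lf Hm w_d_eta).
Qed.

Lemma im_gamma_ker_alpha3 w k : invariant_sym br k -> B_triv br 3 (w - Gamma br k) ->
  B_dual br 2 (alpha_t w).
Proof.
move=> k_inv [g [[_ Hgm Hga] Hg]].
have adj := invariant_sym_adj k_inv; have assoc := invariant_sym_assoc Hlie k_inv.
case: k_inv => k_sym _.
exists (fun s y => k (nth 0 s 0) y + g [:: nth 0 s 0; y]); split.
- split; last exact: alternating1.
  + apply: forall_size1 => x a u v /=.
    by rewrite (sym_form_linr k_sym) (multilinear2E2 Hgm); pointwise; ring.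
  + apply: multilinear1I => a u v; apply: funext => y /=.
    by rewrite (sym_form_linl k_sym) (multilinear2E1 Hgm); pointwise; ring.
- apply: forall_size2 => x y; apply: funext => z; rewrite dCE_coad2 /alpha_t /=.
  have := eq_sub0 (Hg [:: x; y; z] erefl); rewrite dCE_triv3 /Gamma; pointwise => C.
  have A := eq_sub0 (adj x y z); have M := eq_sub0 (assoc x y z).
  rewrite (alternating2_anti Hgm Hga (br y z) x) (alternating2_anti Hgm Hga (br x z) y).
  by lincomb C 1; lincomb A 1; lincomb M 1; ring.
Qed.

Section KernelBeta2.
Variables (w : seq L -> L -> K^o) (sg : L -> L -> K^o).
Hypotheses (w_cocycle : Z_dual br 2 w) (sg_sym : is_sym_bilinear sg).
Hypothesis beta2_w : forall a y z,
  w [:: a; y] z + w [:: a; z] y = - sg (br a y) z - sg y (br a z).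

Definition half_form : seq L -> L -> K^o := fun s y => sg (nth 0 s 0) y / 2%:R.

(* The trivial 3-cochain (x, y, z) |-> (w - d half_form)(x, y)(z); [beta2_w] is
   what makes it alternating in its last two arguments. *)
Definition alpha3_lift : seq L -> K^o := fun s =>
  w [:: nth 0 s 0; nth 0 s 1] (nth 0 s 2)
  - (sg (nth 0 s 0) (br (nth 0 s 1) (nth 0 s 2)) - sg (nth 0 s 1) (br (nth 0 s 0) (nth 0 s 2))
     - sg (br (nth 0 s 0) (nth 0 s 1)) (nth 0 s 2)) / 2%:R.

Lemma alpha3_lift_cochain : cochain (@triv_val K) 3 alpha3_lift.
Proof.
case: w_cocycle => [[Hv Hm Ha] _].
split; [by [] | | ].
- apply: multilinear3I => a u v p q; rewrite /alpha3_lift /=.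
  + rewrite (multilinear2E1 Hm) !(br_linl Hlie) !(sym_form_linl sg_sym).
    by rewrite !(sym_form_linr sg_sym); pointwise; field.
  + rewrite (multilinear2E2 Hm) !(br_linl Hlie) !(br_linr Hlie) !(sym_form_linl sg_sym).
    by rewrite !(sym_form_linr sg_sym); pointwise; field.
  + rewrite (Hv [:: p; q] erefl) !(br_linr Hlie) !(sym_form_linr sg_sym).
    by pointwise; field.
- apply: alternating3I => x y; rewrite /alpha3_lift /=.
  + rewrite (alternating2E Ha) (brxx Hlie) (sym_form0l sg_sym).
    by pointwise; field.
  + have B := eq_sub0 (beta2_w y x x).
    rewrite (br_anti Hlie x y) (sym_formNl sg_sym) (sym_formNr sg_sym) in B.
    rewrite (alternating2_anti Hm Ha y x) (brxx Hlie) (sym_form0r sg_sym).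
    rewrite (br_anti Hlie x y) (sym_formNr sg_sym).
    by pointwise; lincomb B (- 2%:R^-1); field.
  + rewrite (brxx Hlie) (sym_form0r sg_sym).
    by lincomb (eq_sub0 (beta2_w x y y)) (2%:R^-1); field.
Qed.

Lemma alpha3_lift_cocycle : Z_triv br 3 alpha3_lift.
Proof.
split; first exact: alpha3_lift_cochain.
have [_ Hm' Ha'] := alpha3_lift_cochain; have dd := Z_dual2E w_cocycle.
apply: forall_size4 => x y z u.
rewrite -(dCE_alpha_t3 br Hm' Ha') dCE_coad3 /alpha_t /alpha3_lift /=.
have Jr a b c d : sg a (br b (br c d)) - sg a (br c (br b d)) - sg a (br (br b c) d) = 0.
  have := congr1 (sg a) (jacobi Hlie b c d).
  rewrite !(sym_formDr sg_sym) (sym_form0r sg_sym) (br_anti Hlie b d) (brNr Hlie).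
  by rewrite (br_anti Hlie (br b c) d) !(sym_formNr sg_sym).
have Jl : - sg (br (br y z) x) u + sg (br (br x z) y) u - sg (br (br x y) z) u = 0.
  have := congr1 (sg^~ u) (jacobi Hlie x y z).
  rewrite /= !(sym_formDl sg_sym) (sym_form0l sg_sym) (br_anti Hlie (br y z) x).
  rewrite (br_anti Hlie (br x y) z) (br_anti Hlie x z) (brNr Hlie).
  by rewrite (br_anti Hlie (br x z) y) !(sym_formNl sg_sym) opprK.
lincomb (dd x y z u) 1; lincomb (Jr x y z u) (2%:R^-1); lincomb (Jr y x z u) (- 2%:R^-1).
by lincomb (Jr z x y u) (2%:R^-1); lincomb Jl (2%:R^-1); field.
Qed.

Lemma alpha3_lift_cohomologous : B_dual br 2 (w - alpha_t alpha3_lift).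
Proof.
exists half_form; split.
- split; last exact: alternating1.
  + apply: forall_size1 => x a p q.
    by rewrite /half_form /= (sym_form_linr sg_sym); pointwise; field.
  + apply: multilinear1I => a p q; apply: funext => y.
    by rewrite /half_form /= (sym_form_linl sg_sym); pointwise; field.
- apply: forall_size2 => x y; apply: funext => z.
  by rewrite dCE_coad2 /alpha_t /half_form /alpha3_lift; pointwise; field.
Qed.

End KernelBeta2.

Lemma ker_beta2_im_alpha3 w : Z_dual br 2 w -> B_sym br 1 (beta2_t w) ->
  exists w', Z_triv br 3 w' /\ B_dual br 2 (w - alpha_t w').
Proof.
move=> Zw [g [[Hs _ _] Hg]].
have sg_sym : is_sym_bilinear (g [::]) by apply: Hs.
have beta2_w a y z : w [:: a; y] z + w [:: a; z] y = - g [::] (br a y) z - g [::] y (br a z).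
  by move: (congr1 (fun F => F y z) (Hg [:: a] erefl)); rewrite dCE_sym1.
exists (alpha3_lift w (g [::])); split.
- exact: alpha3_lift_cocycle.
- exact: alpha3_lift_cohomologous.
Qed.

Lemma beta2_alpha_t (w : seq L -> K^o) :
  multilinear 3 w -> alternating 3 w -> beta2_t (alpha_t w) = 0.
Proof.
move=> Hm Ha; apply: funext => s; apply: funext => y; apply: funext => z.
by rewrite /beta2_t /alpha_t /= (alternating3_anti23 Hm Ha) addNr.
Qed.

Lemma im_alpha3_ker_beta2 w w' : Z_triv br 3 w' -> B_dual br 2 (w - alpha_t w') ->
  B_sym br 1 (beta2_t w).
Proof.
move=> [[_ Hm Ha] _] /(beta2_coboundary Hlie).
have beta2_lin := @beta2_t_linear K L.
by rewrite (lin_mapD beta2_lin) (lin_mapN beta2_lin) beta2_alpha_t // subr0.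
Qed.

End Exactness.

Theorem proposition7p2 (K : fieldType) (L : lmodType K) (br : L -> L -> L)
  (Hlie : is_lie_bracket br) (H2 : (2%:R : K) != 0) :
  (* --- the cochain-level maps are linear --- *)
  [/\ (forall (a : K) (w w' : seq L -> K^o),
         alpha_t (a *: w + w') = a *: alpha_t w + alpha_t w'),
      (forall (a : K) (e e' : seq L -> (L -> K^o)),
         Ssym (a *: e + e') = a *: Ssym e + Ssym e'),
      (forall (a : K) (k k' : L -> L -> K^o),
         Gamma br (a *: k + k') = a *: Gamma br k + Gamma br k') &
      (forall (a : K) (w w' : seq L -> (L -> K^o)),
         beta2_t (a *: w + w') = a *: beta2_t w + beta2_t w')] /\
  (* --- well-definedness of alpha_2, beta_1, gamma, alpha_3, beta_2 --- *)
  [/\ [/\ (forall w, Z_triv br 2 w -> Z_dual br 1 (alpha_t w)),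
           (forall w, B_triv br 2 w -> B_dual br 1 (alpha_t w)),
           (forall e, Z_dual br 1 e -> invariant_sym br (Ssym e)) &
           (forall e, B_dual br 1 e -> Ssym e = 0)],
      (forall k, invariant_sym br k -> Z_triv br 3 (Gamma br k)),
      [/\ (forall w, Z_triv br 3 w -> Z_dual br 2 (alpha_t w)) &
           (forall w, B_triv br 3 w -> B_dual br 2 (alpha_t w))] &
      [/\ (forall w, Z_dual br 2 w -> Z_sym br 1 (beta2_t w)) &
           (forall w, B_dual br 2 w -> B_sym br 1 (beta2_t w))]] /\
  (* --- exactness --- *)
  [/\ (* at H^2(k): alpha_2 injective *)
      (forall w, Z_triv br 2 w -> B_dual br 1 (alpha_t w) -> B_triv br 2 w),
      (* at H^1(k,k^ * ): ker beta_1 = im alpha_2 *)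
      (forall e, Z_dual br 1 e ->
         (Ssym e = 0 <-> exists w, Z_triv br 2 w /\ B_dual br 1 (e - alpha_t w))),
      (* at Sym^2(k)^k: ker gamma = im beta_1 *)
      (forall k, invariant_sym br k ->
         (B_triv br 3 (Gamma br k) <-> exists e, Z_dual br 1 e /\ Ssym e = k)),
      (* at H^3(k): ker alpha_3 = im gamma *)
      (forall w, Z_triv br 3 w ->
         (B_dual br 2 (alpha_t w) <->
            exists k, invariant_sym br k /\ B_triv br 3 (w - Gamma br k))) &
      (* at H^2(k,k^ * ): ker beta_2 = im alpha_3 *)
      (forall w, Z_dual br 2 w ->
         (B_sym br 1 (beta2_t w) <->
            exists w', Z_triv br 3 w' /\ B_dual br 2 (w - alpha_t w')))].
Proof.
split.
  by split; [exact: alpha_t_linear | exact: Ssym_linear | exact: Gamma_linear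
            | exact: beta2_t_linear].
split.
  split.
  - split; [exact: alpha2_cocycle | exact: alpha2_coboundary
           | exact: beta1_cocycle | exact: beta1_coboundary].
  - by move=> k; apply: gamma_cocycle.
  - split; [exact: alpha3_cocycle | exact: alpha3_coboundary].
  - split; [exact: beta2_cocycle | exact: beta2_coboundary].
split.
- by move=> w _; apply: alpha2_coboundary_reflect.
- move=> e Ze; split; first exact: ker_beta1_im_alpha2.
  by case=> w [Zw]; apply: im_alpha2_ker_beta1.
- move=> k k_inv; split; first exact: ker_gamma_im_beta1.
  by case=> e [Ze <-]; apply: im_beta1_ker_gamma.
- move=> w Zw; split; first exact: ker_alpha3_im_gamma.
  by case=> k [k_inv]; apply: im_gamma_ker_alpha3.
- move=> w Zw; split; first exact: ker_beta2_im_alpha3.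
  by case=> w' [Zw']; apply: im_alpha3_ker_beta2.
Qed.
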